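(* For every odd integer $m\geq 3$, there exists a latin square of order $n=3m$ which is composed of nine subsquares of order $m$ (i.e. when its rows and columns are each split into three consecutive blocks of $m$, each of the nine resulting $m\times m$ blocks is itself a latin square on $m$ symbols), such that every transversal of it contains at least one entry from each of these nine subsquares.
   Context: A latin square of order $n$ is an $n\times n$ array on $n$ symbols in which each symbol occurs exactly once in each row and each column; it is viewed as the set of its $n^2$ entries $(r,c,s)$. A transversal is a set of $n$ entries containing each row, each column and each symbol exactly once. *)

From mathcomp Require Import all_boot.
Set Implicit Arguments. Unset Strict Implicit. Unset Printing Implicit Defensive.

Definition latin_square (n : nat) (L : 'I_n -> 'I_n -> 'I_n) : Prop :=
  (forall r, injective (L r)) /\ (forall c, injective (fun r => L r c)).

Definition in_block (m n : nat) (a b : nat) (rc : 'I_n * 'I_n) : bool :=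
  (rc.1 %/ m == a) && (rc.2 %/ m == b).

Definition block_subsquare (m n : nat) (L : 'I_n -> 'I_n -> 'I_n) (a b : nat) : Prop :=
  #|[set L rc.1 rc.2 | rc in [set rc : 'I_n * 'I_n | in_block m a b rc]]| = m /\
  forall s : 'I_n,
    (exists rc : 'I_n * 'I_n, in_block m a b rc && (L rc.1 rc.2 == s)) ->
    (forall r : 'I_n, r %/ m = a -> exists c : 'I_n, (c %/ m == b) && (L r c == s)) /\
    (forall c : 'I_n, c %/ m = b -> exists r : 'I_n, (r %/ m == a) && (L r c == s)).

Definition latin_transversal (n : nat) (L : 'I_n -> 'I_n -> 'I_n) (T : {set 'I_n * 'I_n}) : Prop :=
  #|T| = n /\
  (forall r : 'I_n, exists! c : 'I_n, (r, c) \in T) /\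
  (forall c : 'I_n, exists! r : 'I_n, (r, c) \in T) /\
  (forall s : 'I_n, exists! rc : 'I_n * 'I_n, (rc \in T) && (L rc.1 rc.2 == s)).

(* Write cells as (a m + i, b m + j) and symbols as K m + t, with a, b, K < 3 and
   i, j, t < m.  Block (a, b) carries the cyclic square t = i + j (mod m) on symbol block
   K = b + 2a (mod 3), except that its cells with t = o_K (where o_2 = 1, o_0 = o_1 = 0)
   carry instead the special symbol K' m + o_K' of block K' = a + b (mod 3).

   Let z_K count the special cells of a transversal lying in blocks with b + 2a = K.  The
   transversal contains each of the three special symbols once, so z_0 + z_1 + z_2 = 3;
   summing symbol blocks modulo 3 gives z_1 + 2 z_2 = 0 (mod 3), and summing offsets modulo
   the odd number m (where 0 + ... + (m - 1) = 0) gives z_2 = 1 (mod m).  Hence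
   z_K = 1 for all K, so the numbers of transversal cells in the nine blocks form a 3 x 3
   array whose row, column and diagonal sums all equal m.  Such an array is constant on the
   anti-diagonals a + b = k, each of which contains a special cell: no block is empty. *)

From mathcomp Require Import all_boot zify.

Lemma big_unique_preimage {R : Type} {idx : R} (op : Monoid.com_law idx)
    {X Y : finType} (T : {set X}) (f : X -> Y) (F : Y -> R) :
  (forall y, exists! x, (x \in T) && (f x == y)) ->
  \big[op/idx]_(x in T) F (f x) = \big[op/idx]_y F y.
Proof.
move=> f_bij; rewrite -big_imset.
  apply: eq_bigl => y; apply/imsetP.
  by have [x [/andP[xT /eqP <-] _]] := f_bij y; exists x.
move=> x1 x2 x1T x2T f12; have [x [_ x_uniq]] := f_bij (f x2).
by rewrite -(x_uniq x1) ?x1T ?f12 ?eqxx // -(x_uniq x2) ?x2T ?eqxx.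
Qed.

Lemma latin_transversal_sums {n} {L : 'I_n -> 'I_n -> 'I_n} {T} (G : nat -> nat) :
  latin_transversal L T ->
  [/\ \sum_(x in T) G x.1 = \sum_(v < n) G v,
      \sum_(x in T) G x.2 = \sum_(v < n) G v &
      \sum_(x in T) G (L x.1 x.2) = \sum_(v < n) G v].
Proof.
move=> [_ [rowT [colT symT]]].
pose sum_in (f : 'I_n * 'I_n -> 'I_n) := big_unique_preimage addn T f (fun v : 'I_n => G v).
split; [apply: (sum_in fst) | apply: (sum_in snd) | exact: (sum_in (fun x => L x.1 x.2) symT)].
- move=> r; have [c [rcT c_uniq]] := rowT r; exists (r, c); split; first by rewrite rcT eqxx.
  by move=> [r' c'] /andP[r'c'T /eqP /= r'r]; rewrite r'r (c_uniq c') // -r'r.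
- move=> c; have [r [rcT r_uniq]] := colT c; exists (r, c); split; first by rewrite rcT eqxx.
  by move=> [r' c'] /andP[r'c'T /eqP /= c'c]; rewrite c'c (r_uniq r') // -c'c.
Qed.

Lemma divnMDl_small m K t : t < m -> (K * m + t) %/ m = K.
Proof. by move=> tm; rewrite divnMDl ?divn_small ?addn0 //; lia. Qed.

Lemma modnMDl_small m K t : t < m -> (K * m + t) %% m = t.
Proof. by move=> tm; rewrite modnMDl modn_small. Qed.

Lemma ltn_block {k m K t} : K < k -> t < m -> K * m + t < k * m.
Proof.
move=> Kk tm; apply: (@leq_trans (K.+1 * m)); first by rewrite mulSn addnC ltn_add2r.
by rewrite leq_mul2r Kk orbT.
Qed.

Lemma sum_ord_blocks k m (F : nat -> nat -> nat) :
  \sum_(v < k * m) F (v %/ m) (v %% m) = \sum_(K < k) \sum_(t < m) F K t.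
Proof.
rewrite -(big_mkord xpredT (fun v => F (v %/ m) (v %% m))) big_nat_mul big_mkord.
apply: eq_bigr => K _; rewrite -{1}(add0n (K * m)) big_addn mulSn addnK big_mkord.
by apply: eq_bigr => t _; rewrite addnC divnMDl_small ?modnMDl_small.
Qed.

Lemma sum_ord_pick {m y} (G : nat -> nat) : y < m -> \sum_(c < m) (c == y :> nat) * G c = G y.
Proof.
move=> ym; rewrite (bigD1 (Ordinal ym)) //= eqxx mul1n big1 ?addn0 // => c /eqP cy.
by case: eqP => // c_y; case: cy; apply: val_inj.
Qed.

Lemma sum_ord_eq1 {m y} : y < m -> \sum_(c < m) (c == y :> nat) = 1.
Proof.
by move=> y_lt; rewrite -(sum_ord_pick (fun=> 1) y_lt); apply: eq_bigr => c _; rewrite muln1.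
Qed.

Lemma dvdn_sum_ord m : odd m -> m %| \sum_(t < m) t.
Proof.
move=> m_odd; rewrite -(big_mkord xpredT (fun t => t)) bin2_sum bin2.
by rewrite -[m]odd_double_half m_odd /= -doubleMr doubleK dvdn_mulr.
Qed.

Lemma sum_indicator_split {I : finType} (P : pred I) (b : pred I) (F : I -> nat) :
  \sum_(i | P i) F i = \sum_(i | P i) (~~ b i) * F i + \sum_(i | P i) b i * F i.
Proof.
by rewrite -big_split; apply: eq_bigr => i _; case: (b i); rewrite /= ?mul0n ?mul1n ?addn0.
Qed.

Lemma sum_by_block k m (G : nat -> nat) :
  \sum_(v < k * m) G (v %/ m) = m * \sum_(K < k) G K.
Proof.
rewrite (sum_ord_blocks k m (fun K _ => G K)) big_distrr.
by apply: eq_bigr => K _; rewrite sum_nat_const card_ord.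
Qed.

Lemma dvdn_sum_offsets k m : odd m -> m %| \sum_(v < k * m) v %% m.
Proof.
move=> m_odd; rewrite (sum_ord_blocks k m (fun _ t => t)).
by apply: dvdn_sum => K _; exact: dvdn_sum_ord.
Qed.

(* With this choice the offset count modulo [m] sees only symbol block 2. *)
Definition special_offset (K : nat) : nat := K == 2.

Definition special m v := v %% m == special_offset (v %/ m).

Lemma special_offset_lt m K : 1 < m -> special_offset K < m.
Proof. by rewrite /special_offset; case: (K == 2) => /=; lia. Qed.

Lemma sum_special_by_block k m (G : nat -> nat) : 1 < m ->
  \sum_(v < k * m) special m v * G (v %/ m) = \sum_(K < k) G K.
Proof.
move=> m_gt1; rewrite (sum_ord_blocks k m (fun K t => (t == special_offset K) * G K)).
apply: eq_bigr => K _.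
by rewrite (sum_ord_pick (fun=> G K)) // special_offset_lt.
Qed.

Lemma sum_regular_by_block k m (G : nat -> nat) : 1 < m ->
  \sum_(v < k * m) (~~ special m v) * G (v %/ m) = m.-1 * \sum_(K < k) G K.
Proof.
move=> m_gt1; have := sum_by_block k m G.
rewrite (sum_indicator_split _ (fun v : 'I_(k * m) => special m v)) sum_special_by_block //.
by case: m m_gt1 => // m' _; rewrite mulSn addnC => /addnI.
Qed.

Definition main_block (a b : nat) := (b + 2 * a) %% 3.

Definition swap_block (a b : nat) := (a + b) %% 3.

Definition symbol m a b t :=
  if t == special_offset (main_block a b)
  then swap_block a b * m + special_offset (swap_block a b)
  else main_block a b * m + t.

Section Symbol.

Context {m : nat} (m_gt1 : 1 < m).

Lemma symbol_div a b t : t < m ->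
  symbol m a b t %/ m =
    if t == special_offset (main_block a b) then swap_block a b else main_block a b.
Proof. by move=> tm; rewrite /symbol; case: ifP => _; rewrite divnMDl_small ?special_offset_lt. Qed.

Lemma symbol_mod a b t : t < m ->
  symbol m a b t %% m =
    if t == special_offset (main_block a b) then special_offset (swap_block a b) else t.
Proof. by move=> tm; rewrite /symbol; case: ifP => _; rewrite modnMDl_small ?special_offset_lt. Qed.

Lemma special_symbol a b t : t < m ->
  special m (symbol m a b t) = (t == special_offset (main_block a b)).
Proof.
move=> tm; rewrite /special symbol_div // symbol_mod //.
by case: ifP => [_|->]; rewrite ?eqxx.
Qed.

Lemma symbol_lt a b t : t < m -> symbol m a b t < 3 * m.
Proof.
by move=> tm; rewrite /symbol; case: ifP => _; rewrite ltn_block ?ltn_mod ?special_offset_lt.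
Qed.

Lemma symbol_inj {a1 b1 a2 b2 t1 t2} : t1 < m -> t2 < m ->
  (main_block a1 b1 = main_block a2 b2 -> (a1, b1) = (a2, b2)) ->
  (swap_block a1 b1 = swap_block a2 b2 -> (a1, b1) = (a2, b2)) ->
  symbol m a1 b1 t1 = symbol m a2 b2 t2 -> (a1, b1) = (a2, b2) /\ t1 = t2.
Proof.
move=> t1m t2m main_inj swap_inj eq_sym.
have := congr1 (divn^~ m) eq_sym; have := congr1 (modn^~ m) eq_sym.
rewrite /= !symbol_div ?symbol_mod //.
case: eqP => [t1E|t1N]; case: eqP => [t2E|t2N].
- move=> _ /swap_inj eq12; split=> //.
  by rewrite t1E t2E; case: eq12 => -> ->.
- by move=> t2E blockE; case: t2N; rewrite -t2E blockE.
- by move=> t1E blockE; case: t1N; rewrite t1E blockE.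
- by move=> <- /main_inj.
Qed.

Lemma symbol_injr {a b1 b2 t1 t2} : b1 < 3 -> b2 < 3 -> t1 < m -> t2 < m ->
  symbol m a b1 t1 = symbol m a b2 t2 -> b1 = b2 /\ t1 = t2.
Proof.
move=> b1_lt b2_lt t1m t2m /(symbol_inj t1m t2m) [||[->] ->] //;
  rewrite /main_block /swap_block => blockE; congr pair; lia.
Qed.

Lemma symbol_injl {a1 a2 b t1 t2} : a1 < 3 -> a2 < 3 -> t1 < m -> t2 < m ->
  symbol m a1 b t1 = symbol m a2 b t2 -> a1 = a2 /\ t1 = t2.
Proof.
move=> a1_lt a2_lt t1m t2m /(symbol_inj t1m t2m) [||[->] ->] //;
  rewrite /main_block /swap_block => blockE; congr pair; lia.
Qed.

End Symbol.

Definition block_square_nat m r c := symbol m (r %/ m) (c %/ m) ((r %% m + c %% m) %% m).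

(* The default [r] of [insubd] is never used when [1 < m]. *)
Definition block_square m (r c : 'I_(3 * m)) : 'I_(3 * m) := insubd r (block_square_nat m r c).

Lemma offset_inj m x y1 y2 : y1 < m -> y2 < m -> (x + y1) %% m = (x + y2) %% m -> y1 = y2.
Proof. by move=> y1m y2m /eqP; rewrite eqn_modDl !modn_small // => /eqP. Qed.

Lemma offset_solve {m x t} : x < m -> t < m -> exists2 y, y < m & (x + y) %% m = t.
Proof.
move=> xm tm; exists ((t + (m - x)) %% m); first by rewrite ltn_pmod //; lia.
by rewrite modnDmr (_ : x + _ = t + m) ?modnDr ?modn_small //; lia.
Qed.

Lemma block_lt3 {m} (v : 'I_(3 * m)) : v %/ m < 3.
Proof. by case: m v => [|m] v; rewrite ?divn0 // ltn_divLR // mulnC. Qed.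

Section BlockSquare.

Context {m : nat} (m_gt1 : 1 < m).

Let m_gt0 : 0 < m := ltnW m_gt1.

Lemma ord_block_eq (v1 v2 : 'I_(3 * m)) : v1 %/ m = v2 %/ m -> v1 %% m = v2 %% m -> v1 = v2.
Proof. by move=> divE modE; apply: val_inj; rewrite /= (divn_eq v1 m) (divn_eq v2 m) divE modE. Qed.

Lemma block_square_val r c : val (block_square m r c) = block_square_nat m r c.
Proof. by rewrite val_insubd /block_square_nat symbol_lt ?ltn_pmod. Qed.

Lemma block_square_latin : latin_square (block_square m).
Proof.
split=> [r c1 c2 | c r1 r2] /(congr1 val); rewrite !block_square_val.
- case/(symbol_injr m_gt1 (block_lt3 c1) (block_lt3 c2) (ltn_pmod _ m_gt0) (ltn_pmod _ m_gt0)).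
  by move=> divE /offset_inj modE; apply: ord_block_eq => //; apply: modE; rewrite ltn_pmod.
- case/(symbol_injl m_gt1 (block_lt3 r1) (block_lt3 r2) (ltn_pmod _ m_gt0) (ltn_pmod _ m_gt0)).
  rewrite ![_ + c %% m]addnC.
  by move=> divE /offset_inj modE; apply: ord_block_eq => //; apply: modE; rewrite ltn_pmod.
Qed.

Lemma card_block_symbols a b : a < 3 -> b < 3 ->
  #|[set block_square m rc.1 rc.2 | rc in [set rc : 'I_(3 * m) * 'I_(3 * m) | in_block m a b rc]]|
  = m.
Proof.
move=> a_lt b_lt; pose sym_ab (t : 'I_m) := Ordinal (symbol_lt m_gt1 a b t (ltn_ord t)).
rewrite -[RHS]card_ord -(card_imset _ (f := sym_ab)); last first.
  move=> t1 t2 /(congr1 val) /(symbol_injr m_gt1 b_lt b_lt (ltn_ord t1) (ltn_ord t2)).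
  by case=> _ /val_inj.
congr #|pred_of_set _|; apply/setP => s; apply/imsetP/imsetP => [[[r c]] | [t _ ->]].
  rewrite inE /in_block => /andP[/= /eqP ra /eqP cb] ->.
  exists (Ordinal (ltn_pmod (r %% m + c %% m) m_gt0)) => //.
  by apply: val_inj; rewrite /= block_square_val /block_square_nat ra cb.
exists (Ordinal (ltn_block a_lt m_gt0), Ordinal (ltn_block b_lt (ltn_ord t))).
  by rewrite inE /in_block /= !divnMDl_small ?eqxx.
apply: val_inj; rewrite /= block_square_val /block_square_nat.
by rewrite !divnMDl_small // !modnMDl_small // add0n modn_small.
Qed.

Lemma block_square_row_block (r0 c0 r : 'I_(3 * m)) : r %/ m = r0 %/ m ->
  exists c : 'I_(3 * m), (c %/ m == c0 %/ m) && (block_square m r c == block_square m r0 c0).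
Proof.
move=> rr0; have c0_lt := block_lt3 c0.
have [j j_lt rjE] := offset_solve (ltn_pmod r m_gt0) (ltn_pmod (r0 %% m + c0 %% m) m_gt0).
exists (Ordinal (ltn_block c0_lt j_lt)); rewrite /= divnMDl_small // eqxx /=.
apply/eqP/val_inj; rewrite !block_square_val /block_square_nat /=.
by rewrite divnMDl_small // modnMDl_small // rjE rr0.
Qed.

Lemma block_square_col_block (r0 c0 c : 'I_(3 * m)) : c %/ m = c0 %/ m ->
  exists r : 'I_(3 * m), (r %/ m == r0 %/ m) && (block_square m r c == block_square m r0 c0).
Proof.
move=> cc0; have r0_lt := block_lt3 r0.
have [i i_lt icE] := offset_solve (ltn_pmod c m_gt0) (ltn_pmod (r0 %% m + c0 %% m) m_gt0).
exists (Ordinal (ltn_block r0_lt i_lt)); rewrite /= divnMDl_small // eqxx /=.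
apply/eqP/val_inj; rewrite !block_square_val /block_square_nat /=.
by rewrite divnMDl_small // modnMDl_small // addnC icE cc0.
Qed.

Lemma block_square_subsquare a b : a < 3 -> b < 3 -> block_subsquare m (block_square m) a b.
Proof.
move=> a_lt b_lt; split; first exact: card_block_symbols.
move=> s [[r0 c0] /andP[/andP[/= /eqP <- /eqP <-] /eqP <-]].
by split=> [r | c]; [exact: block_square_row_block | exact: block_square_col_block].
Qed.

Lemma special_block_square r c : special m (block_square_nat m r c) =
  ((r %% m + c %% m) %% m == special_offset (main_block (r %/ m) (c %/ m))).
Proof. by rewrite special_symbol ?ltn_pmod. Qed.

Lemma block_square_div r c : block_square_nat m r c %/ m =
  if special m (block_square_nat m r c) then swap_block (r %/ m) (c %/ m)
  else main_block (r %/ m) (c %/ m).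
Proof. by rewrite special_block_square symbol_div ?ltn_pmod. Qed.

Lemma block_square_mod r c :
  block_square_nat m r c %% m
    + special m (block_square_nat m r c) * special_offset (main_block (r %/ m) (c %/ m))
  = r %% m + c %% m
    + special m (block_square_nat m r c) * special_offset (swap_block (r %/ m) (c %/ m)) %[mod m].
Proof.
rewrite special_block_square symbol_mod ?ltn_pmod //.
case: eqP => [offsetE | _]; last by rewrite !mul0n !addn0 modn_mod.
by rewrite !mul1n -[RHS]modnDml offsetE addnC.
Qed.

End BlockSquare.

Definition block_sum (t : nat -> nat -> nat) (P : nat -> nat -> bool) :=
  \sum_(i < 3) \sum_(j < 3) P i j * t i j.

(* Equal row, column and diagonal sums force [t] to be constant on the
   anti-diagonals [i + j = k (mod 3)]. *)
Lemma block_sum_pos t s :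
  (forall a, a < 3 -> block_sum t (fun i _ => i == a) = s) ->
  (forall b, b < 3 -> block_sum t (fun _ j => j == b) = s) ->
  (forall c, c < 3 -> block_sum t (fun i j => main_block i j == c) = s) ->
  (forall k, k < 3 -> 0 < block_sum t (fun i j => swap_block i j == k)) ->
  forall a b, a < 3 -> b < 3 -> 0 < t a b.
Proof.
move=> rows cols mains swaps a b a_lt b_lt.
move: (rows 0 isT) (rows 1 isT) (rows 2 isT) (cols 0 isT) (cols 1 isT) (cols 2 isT).
move: (mains 0 isT) (mains 1 isT) (mains 2 isT) (swaps 0 isT) (swaps 1 isT) (swaps 2 isT).
rewrite /block_sum !big_ord_recr !big_ord0 /=.
case: a a_lt => [|[|[|//]]] _; case: b b_lt => [|[|[|//]]] _;
  move: (t 0 0) (t 0 1) (t 0 2) (t 1 0) (t 1 1) (t 1 2) (t 2 0) (t 2 1) (t 2 2); lia.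
Qed.

Definition block_count {m} (T : {set 'I_(3 * m) * 'I_(3 * m)}) i j :=
  \sum_(x in T) in_block m i j x.

Lemma sum_by_cell_block {m} (T : {set 'I_(3 * m) * 'I_(3 * m)}) (P : nat -> nat -> bool) :
  \sum_(x in T) P (x.1 %/ m) (x.2 %/ m) = block_sum (block_count T) P.
Proof.
rewrite /block_sum /block_count.
under [RHS]eq_bigr => i _ do under eq_bigr => j _ do rewrite big_distrr.
under [RHS]eq_bigr => i _ do rewrite exchange_big.
rewrite exchange_big; apply: eq_bigr => x _ /=.
rewrite -(sum_ord_pick (fun i => P i (x.2 %/ m)) (block_lt3 x.1)); apply: eq_bigr => i _.
rewrite -(sum_ord_pick (fun j => P i j) (block_lt3 x.2)) big_distrr; apply: eq_bigr => j _.
rewrite /in_block !(eq_sym (_ %/ m)).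
by case: (_ == x.1 %/ m); case: (_ == x.2 %/ m); rewrite /= ?mul0n ?muln0 ?mul1n ?muln1.
Qed.

Section Transversal.

Context {m : nat} (m_ge3 : 3 <= m) (m_odd : odd m) (T : {set 'I_(3 * m) * 'I_(3 * m)}).
Hypothesis T_transversal : latin_transversal (block_square m) T.

Let m_gt1 : 1 < m := leq_trans (isT : 1 < 3) m_ge3.

Let sym (x : 'I_(3 * m) * 'I_(3 * m)) := block_square_nat m x.1 x.2.
Let main (x : 'I_(3 * m) * 'I_(3 * m)) := main_block (x.1 %/ m) (x.2 %/ m).
Let swap (x : 'I_(3 * m) * 'I_(3 * m)) := swap_block (x.1 %/ m) (x.2 %/ m).
Let special_cell x := special m (sym x).

Let nspecial (c : nat) := \sum_(x in T) special_cell x * (main x == c).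

Lemma transversal_sum_rows (F : nat -> nat) : \sum_(x in T) F x.1 = \sum_(v < 3 * m) F v.
Proof. by case: (latin_transversal_sums F T_transversal). Qed.

Lemma transversal_sum_cols (F : nat -> nat) : \sum_(x in T) F x.2 = \sum_(v < 3 * m) F v.
Proof. by case: (latin_transversal_sums F T_transversal). Qed.

Lemma transversal_sum_syms (F : nat -> nat) : \sum_(x in T) F (sym x) = \sum_(v < 3 * m) F v.
Proof.
case: (latin_transversal_sums F T_transversal) => _ _ <-.
by apply: eq_bigr => x _; rewrite block_square_val.
Qed.

Lemma sum_special_swap (G : nat -> nat) :
  \sum_(x in T) special_cell x * G (swap x) = \sum_(K < 3) G K.
Proof.
rewrite -(sum_special_by_block 3 m G m_gt1).
rewrite -(transversal_sum_syms (fun v => special m v * G (v %/ m))).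
by apply: eq_bigr => x _; rewrite /special_cell /sym block_square_div //; case: ifP.
Qed.

Lemma sum_regular_main (G : nat -> nat) :
  \sum_(x in T) (~~ special_cell x) * G (main x) = m.-1 * \sum_(K < 3) G K.
Proof.
rewrite -(sum_regular_by_block 3 m G m_gt1).
rewrite -(transversal_sum_syms (fun v => (~~ special m v) * G (v %/ m))).
by apply: eq_bigr => x _; rewrite /special_cell /sym block_square_div //; case: ifP.
Qed.

Lemma sum_special_main (G : nat -> nat) :
  \sum_(x in T) special_cell x * G (main x) = \sum_(c < 3) G c * nspecial c.
Proof.
under [RHS]eq_bigr => c _ do rewrite big_distrr.
rewrite exchange_big; apply: eq_bigr => x _ /=.
rewrite -(sum_ord_pick G (_ : main x < 3)) ?ltn_mod // big_distrr.
by apply: eq_bigr => c _; rewrite eq_sym mulnCA mulnC.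
Qed.

Lemma nspecial_total : nspecial 0 + nspecial 1 + nspecial 2 = 3.
Proof.
have := sum_special_main (fun=> 1); rewrite !big_ord_recr big_ord0 /= !mul1n => <-.
transitivity (\sum_(K < 3) 1); last by rewrite sum_nat_const card_ord.
exact: etrans (transversal_sum_syms (fun v => special m v * 1))
              (sum_special_by_block 3 m (fun=> 1) m_gt1).
Qed.

Lemma nspecial_mod3 : (nspecial 1 + 2 * nspecial 2) %% 3 = 0.
Proof.
have sum_main : \sum_(x in T) main x = m.-1 * 3 + (nspecial 1 + 2 * nspecial 2).
  rewrite (sum_indicator_split _ special_cell) (sum_regular_main (fun c => c)).
  rewrite (sum_special_main (fun c => c)).
  by rewrite !big_ord_recr !big_ord0 /=; lia.
have : \sum_(x in T) main x = \sum_(x in T) (x.2 %/ m + 2 * (x.1 %/ m)) %[mod 3].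
  exact: modn_summ.
rewrite sum_main big_split /= -big_distrr /= (transversal_sum_rows (fun v => v %/ m)).
rewrite (transversal_sum_cols (fun v => v %/ m)) (sum_by_block 3 m (fun K => K)).
rewrite !big_ord_recr !big_ord0 /=; lia.
Qed.

Lemma nspecial2_eq1 : nspecial 2 = 1.
Proof.
have sum_offsets : \sum_(x in T) (sym x %% m + special_cell x * special_offset (main x))
    = \sum_(x in T) (x.1 %% m + x.2 %% m + special_cell x * special_offset (swap x)) %[mod m].
  rewrite -[LHS]modn_summ -[RHS]modn_summ; congr (_ %% m).
  by apply: eq_bigr => x _; exact: block_square_mod.
have dvd_syms : m %| \sum_(x in T) sym x %% m.
  by rewrite (transversal_sum_syms (fun v => v %% m)) dvdn_sum_offsets.
have dvd_rows : m %| \sum_(x in T) x.1 %% m.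
  by rewrite (transversal_sum_rows (fun v => v %% m)) dvdn_sum_offsets.
have dvd_cols : m %| \sum_(x in T) x.2 %% m.
  by rewrite (transversal_sum_cols (fun v => v %% m)) dvdn_sum_offsets.
move: sum_offsets; rewrite !big_split /=.
rewrite (sum_special_main special_offset) (sum_special_swap special_offset).
rewrite -(divnK dvd_syms) -(divnK dvd_rows) -(divnK dvd_cols) -mulnDl !modnMDl.
rewrite !big_ord_recr !big_ord0 /= (modn_small m_gt1) => n2E.
have n2_lt : nspecial 2 < m.
  rewrite ltn_neqAle; apply/andP; split; last by have := nspecial_total; lia.
  by apply/eqP => n2m; move: n2E; rewrite n2m mul1n add0n modnn.
by move: n2E; rewrite !mul0n !mul1n !add0n modn_small.
Qed.

Lemma nspecial_eq1 c : c < 3 -> nspecial c = 1.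
Proof.
move=> c_lt; have := nspecial_total; have := nspecial_mod3; have := nspecial2_eq1.
by case: c c_lt => [|[|[|//]]] _; move: (nspecial 0) (nspecial 1) (nspecial 2); lia.
Qed.

Lemma count_rows a : a < 3 -> \sum_(x in T) (x.1 %/ m == a) = m.
Proof.
move=> a_lt; rewrite (transversal_sum_rows (fun v => v %/ m == a)).
by rewrite (sum_by_block 3 m (fun K => K == a)) (sum_ord_eq1 a_lt) muln1.
Qed.

Lemma count_cols b : b < 3 -> \sum_(x in T) (x.2 %/ m == b) = m.
Proof.
move=> b_lt; rewrite (transversal_sum_cols (fun v => v %/ m == b)).
by rewrite (sum_by_block 3 m (fun K => K == b)) (sum_ord_eq1 b_lt) muln1.
Qed.

Lemma count_main c : c < 3 -> \sum_(x in T) (main x == c) = m.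
Proof.
move=> c_lt; rewrite (sum_indicator_split _ special_cell) (sum_regular_main (fun K => K == c)).
rewrite (sum_ord_eq1 c_lt) muln1 -/(nspecial c) nspecial_eq1 // addn1.
by case: m m_gt1.
Qed.

Lemma count_swap k : k < 3 -> 0 < \sum_(x in T) (swap x == k).
Proof.
move=> k_lt; apply: (@leq_trans (\sum_(x in T) special_cell x * (swap x == k))).
  by rewrite (sum_special_swap (fun K => K == k)) (sum_ord_eq1 k_lt).
by apply: leq_sum => x _; case: (special_cell x); rewrite ?mul1n.
Qed.

Lemma transversal_meets_blocks a b : a < 3 -> b < 3 ->
  exists rc : 'I_(3 * m) * 'I_(3 * m), (rc \in T) && in_block m a b rc.
Proof.
move=> a_lt b_lt.
have : 0 < block_count T a b.
  apply: (block_sum_pos (block_count T) m) => // [a' | b' | c | k] lt3; rewrite -sum_by_cell_block.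
  - exact: count_rows.
  - exact: count_cols.
  - exact: count_main.
  - exact: count_swap.
rewrite lt0n sum_nat_eq0 => /forallPn [x]; rewrite negb_imply eqb0 negbK => /andP[xT x_in].
by exists x; rewrite xT.
Qed.

End Transversal.

Theorem theorem3 (m : nat) (hm : 3 <= m) (hodd : odd m) :
  exists L : 'I_(3 * m) -> 'I_(3 * m) -> 'I_(3 * m),
    latin_square L /\
    (forall a b : nat, a < 3 -> b < 3 -> block_subsquare m L a b) /\
    (forall T : {set 'I_(3 * m) * 'I_(3 * m)}, latin_transversal L T ->
       forall a b : nat, a < 3 -> b < 3 ->
         exists rc : 'I_(3 * m) * 'I_(3 * m), (rc \in T) && in_block m a b rc).
Proof.
have m_gt1 : 1 < m := leq_trans (isT : 1 < 3) hm.
exists (block_square m); split; first exact: block_square_latin.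
split; first exact: block_square_subsquare.
by move=> T T_transversal a b; exact: transversal_meets_blocks.
Qed.
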